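(* Let $N\ge1$ and let $P_N$ be as in the context. For every $t\in(0,\pi)$ with $t\ne\frac{2\pi}{N+2}$, writing $c=\cos\frac{2\pi}{N+2}$, $$ 4|P_N(e^{it})|^2=\left(\frac{\cos\frac{(N+2)t}{2}}{\cos t-c}+\frac{2}{N+2}\cdot\frac{1-c}{1-\cos t}\cdot\frac{\sin t}{(\cos t-c)^2}\,\sin\frac{(N+2)t}{2}\right)^2+\left(\frac{\sin\frac{(N+2)t}{2}}{\cos t-c}\right)^2. $$
   Context: For an integer $N\ge1$ put, for $k=1,\dots,N$, $$b_k=\frac{(N-k+3)\sin\frac{(k+1)\pi}{N+2}-(N-k+1)\sin\frac{(k-1)\pi}{N+2}}{(N+2)\sin\frac{\pi}{N+2}},$$ and define $P_N(z)=\frac{1}{\sin\frac{2\pi}{N+2}}\sum_{k=1}^N b_k\sin\frac{k\pi}{N+2}\,z^k$ (so $P_N(0)=0$, $P_N'(0)=1$). *)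

From Stdlib Require Import Reals Lra.
Open Scope R_scope.

Definition bcoef (N k : nat) : R :=
  let M := INR N + 2 in
  let K := INR k in
  ((M - K + 1) * sin ((K + 1) * PI / M) - (M - K - 1) * sin ((K - 1) * PI / M))
  / (M * sin (PI / M)).

(* coefficient of z^k in P_N *)
Definition pcoef (N k : nat) : R :=
  let M := INR N + 2 in
  / sin (2 * PI / M) * (bcoef N k * sin (INR k * PI / M)).

(* P_N(e^{it}) = ReP + i ImP, coefficients being real:
   ReP = sum_{k=1}^N pcoef k cos(kt), ImP = sum_{k=1}^N pcoef k sin(kt). *)
Definition P_re (N : nat) (t : R) : R :=
  sum_f_R0 (fun j => pcoef N (S j) * cos (INR (S j) * t)) (N - 1).
Definition P_im (N : nat) (t : R) : R :=
  sum_f_R0 (fun j => pcoef N (S j) * sin (INR (S j) * t)) (N - 1).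

Definition P_abs2 (N : nat) (t : R) : R := P_re N t ^ 2 + P_im N t ^ 2.

From Stdlib Require Import Reals Lra Lia.
From Coquelicot Require Import Coquelicot.
Open Scope R_scope.

(* Put M = N + 2, phi = 2 PI / M and c = cos phi.  The coefficient of z^k in P_N is
   (1 - cos (k phi)) / (M (1 - c)) + (M - k) / M * sin (k phi) / sin phi,
   a combination of w^k, w^-k, k w^k and k w^-k for the M-th root of unity w = e^{i phi}.
   It vanishes for k = 0 and k = N + 1, so P_N(z) is a sum over a full period of w, and
   geometric summation gives 2 P_N(e^{it}) = a + b e^{iMt/2} with a = 1/(cos t - c) and b real.
   The formula is then |a + b e^{i theta}| = |a e^{i theta} + b|. *)

Definition cis (x : R) : C := (cos x, sin x).

Lemma C_ext (a b : C) : fst a = fst b -> snd a = snd b -> a = b.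
Proof. destruct a, b; simpl; intros; subst; reflexivity. Qed.

Lemma RtoC_neq0 (x : R) : x <> 0 -> RtoC x <> 0%C.
Proof. intros hx h. apply hx. exact (f_equal fst h). Qed.

Lemma cis_add x y : cis (x + y) = (cis x * cis y)%C.
Proof. apply C_ext; unfold cis; simpl; [rewrite cos_plus | rewrite sin_plus]; ring. Qed.

Lemma cis_opp x : cis (- x) = (/ cis x)%C.
Proof.
  assert (h1 : cos x * cos x + sin x * sin x = 1).
  { pose proof (sin2_cos2 x) as h; unfold Rsqr in h; lra. }
  unfold cis, Cinv; simpl. rewrite cos_neg, sin_neg, !Rmult_1_r, h1.
  apply C_ext; simpl; field.
Qed.

Lemma cis_neq0 x : cis x <> 0%C.
Proof.
  intro h. pose proof (sin2_cos2 x) as h1. unfold Rsqr in h1.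
  apply (f_equal fst) in h as hc. apply (f_equal snd) in h as hs.
  simpl in hc, hs. rewrite hc, hs in h1. lra.
Qed.

Lemma cis_pow x n : (cis x ^ n)%C = cis (INR n * x).
Proof.
  induction n as [|n IH].
  - apply C_ext; unfold cis; simpl; rewrite Rmult_0_l; [rewrite cos_0 | rewrite sin_0]; reflexivity.
  - rewrite Cpow_S, IH, <- cis_add, S_INR. f_equal. ring.
Qed.

Lemma cis_0 : cis 0 = 1%C.
Proof. apply C_ext; unfold cis; simpl; [apply cos_0 | apply sin_0]. Qed.

Lemma cis_2PI : cis (2 * PI) = 1%C.
Proof. apply C_ext; unfold cis; simpl; [apply cos_2PI | apply sin_2PI]. Qed.

Lemma cis_add_inv x : (cis x + / cis x)%C = RtoC (2 * cos x).
Proof. rewrite <- cis_opp. apply C_ext; unfold cis; simpl; rewrite ?cos_neg, ?sin_neg; ring. Qed.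

Lemma cis_sub_inv x : (cis x - / cis x)%C = (RtoC (2 * sin x) * Ci)%C.
Proof. rewrite <- cis_opp. apply C_ext; unfold cis; simpl; rewrite ?cos_neg, ?sin_neg; ring. Qed.

Lemma cis_avg x : ((cis x + / cis x) / 2)%C = RtoC (cos x).
Proof. rewrite cis_add_inv, RtoC_mult. field. Qed.

Lemma cis_sin_mul x y : (- (cis x - / cis x) * (cis y - / cis y) / 4)%C = RtoC (sin x * sin y).
Proof. rewrite !cis_sub_inv. apply C_ext; simpl; field. Qed.

Lemma cis_neq x y : x <> y -> - (2 * PI) < x - y < 2 * PI -> cis x <> cis y.
Proof.
  intros hxy hr h.
  assert (h1 : cis (x - y) = 1%C).
  { unfold Rminus. rewrite cis_add, cis_opp, h. field. apply cis_neq0. }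
  apply (f_equal fst) in h1. unfold cis in h1; simpl in h1.
  replace (x - y) with (2 * ((x - y) / 2)) in h1 by field. rewrite cos_2a_sin in h1.
  assert (hs : sin ((x - y) / 2) <> 0).
  { destruct (Rlt_or_le 0 (x - y)).
    - apply Rgt_not_eq, sin_gt_0; lra.
    - apply Rlt_not_eq, sin_lt_0_var; lra. }
  apply hs. nra.
Qed.

Section ComplexSums.
Local Open Scope C_scope.

Fixpoint csum (f : nat -> C) (n : nat) : C :=
  match n with O => f O | S n => csum f n + f (S n) end.

Lemma csum_ext (f g : nat -> C) n : (forall k, f k = g k) -> csum f n = csum g n.
Proof. intro h; induction n; simpl; rewrite ?IHn, h; reflexivity. Qed.

Lemma csum_add (f g : nat -> C) n : csum (fun k => f k + g k) n = csum f n + csum g n.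
Proof. induction n as [|n IH]; simpl; rewrite ?IH; ring. Qed.

Lemma csum_scal (a : C) (f : nat -> C) n : csum (fun k => a * f k) n = a * csum f n.
Proof. induction n as [|n IH]; simpl; rewrite ?IH; ring. Qed.

Lemma csum_fst (f : nat -> C) n : fst (csum f n) = sum_f_R0 (fun k => fst (f k)) n.
Proof. induction n as [|n IH]; simpl; rewrite ?IH; reflexivity. Qed.

Lemma csum_snd (f : nat -> C) n : snd (csum f n) = sum_f_R0 (fun k => snd (f k)) n.
Proof. induction n as [|n IH]; simpl; rewrite ?IH; reflexivity. Qed.

Lemma csum_geom (q : C) n : q <> 1 -> csum (fun k => q ^ k) n = (1 - q ^ S n) / (1 - q).
Proof.
  intro hq. assert (hq1 : 1 - q <> 0) by (apply Cminus_eq_contra; auto).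
  induction n as [|n IH].
  - simpl. field. exact hq1.
  - cbn [csum]. rewrite IH, !Cpow_S. field. exact hq1.
Qed.

Lemma csum_INR_mul_geom (q : C) n : q <> 1 ->
  csum (fun k => RtoC (INR k) * q ^ k) n
  = (q - RtoC (INR (S n)) * q ^ S n + RtoC (INR n) * q ^ S (S n)) / ((1 - q) * (1 - q)).
Proof.
  intro hq. assert (hq1 : 1 - q <> 0) by (apply Cminus_eq_contra; auto).
  induction n as [|n IH].
  - simpl. field. exact hq1.
  - cbn [csum]. rewrite IH, !Cpow_S, !S_INR, !RtoC_plus.
    field. exact hq1.
Qed.
End ComplexSums.

Section RootOfUnitySum.
Local Open Scope C_scope.

Definition acoef (M w : C) (k : nat) : C :=
  (2 - (w ^ k + / w ^ k)) / (M * (2 - (w + / w)))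
  + (M - INR k) * ((w ^ k - / w ^ k) / (M * (w - / w))).

Lemma Cminus_sq_neq0 (w : C) : w <> 1 -> 2 * w - (w * w + 1) <> 0.
Proof.
  intros hw h. apply (Cmult_neq_0 (w - 1) (w - 1)); try (apply Cminus_eq_contra; exact hw).
  transitivity (- (2 * w - (w * w + 1))); [ring | rewrite h; ring].
Qed.

Lemma acoef_mul_pow_geom (M w z : C) (k : nat) : M <> 0 -> w <> 0 -> w <> 1 -> w * w <> 1 ->
  let a := / (M * (2 - (w + / w))) in
  let b := / (M * (w - / w)) in
  acoef M w k * z ^ k
  = 2 * a * z ^ k + (b * M - a) * (z * w) ^ k + (- a - b * M) * (z / w) ^ k
    + - b * (INR k * (z * w) ^ k) + b * (INR k * (z / w) ^ k).
Proof.
  intros hM hw hw1 hw2 a b. unfold a, b, acoef, Cdiv.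
  rewrite !Cpow_mult_l, Cpow_inv by exact hw.
  assert (hwk : w ^ k <> 0) by (apply Cpow_nz; exact hw).
  field; repeat split; auto using Cminus_eq_contra, Cminus_sq_neq0.
Qed.

(* V stands for z^((n+1)/2): as w ^ S n = 1, each of the ratios z, z w and z / w has
   (S n)-th power V * V. *)
Lemma csum_acoef_period (n : nat) (w z V : C) :
  let M := RtoC (INR (S n)) in
  let cz := (z + / z) / 2 in
  let cw := (w + / w) / 2 in
  w ^ S n = 1 -> z ^ S n = V * V ->
  z <> 0 -> V <> 0 -> w <> 1 -> w * w <> 1 -> z <> 1 -> z * w <> 1 -> z <> w ->
  2 * csum (fun k => acoef M w k * z ^ k) n
  = / (cz - cw) + 2 / M * ((1 - cw) / (1 - cz)) * / ((cz - cw) * (cz - cw))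
                  * (- (z - / z) * (V - / V) / 4) * V.
Proof.
  intros M cz cw hwn hzn hz hV hw1 hw2 hz1 hzw1 hzw.
  assert (hw : w <> 0).
  { intro h. rewrite h, Cpow_S, Cmult_0_l in hwn. apply (f_equal fst) in hwn. simpl in hwn. lra. }
  assert (hM : M <> 0).
  { intro h. apply (not_0_INR (S n) (Nat.neq_succ_0 n)). exact (f_equal fst h). }
  rewrite (csum_ext _ _ _ (fun k => acoef_mul_pow_geom M w z k hM hw hw1 hw2)).
  assert (hzw' : z / w <> 1).
  { intro h. apply hzw. transitivity (z / w * w); [field; exact hw | rewrite h; ring]. }
  rewrite !csum_add, !csum_scal, !csum_geom, !csum_INR_mul_geom by assumption.
  rewrite !(Cpow_S _ (S n)). unfold Cdiv.
  rewrite !Cpow_mult_l, !Cpow_inv, hwn, hzn by exact hw.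
  unfold cz, cw. unfold M in hM |- *. rewrite S_INR, RtoC_plus in hM |- *.
  generalize dependent (RtoC (INR n)). intros m hM.
  field; repeat split; auto using Cminus_eq_contra, Cminus_sq_neq0, not_eq_sym.
  - replace ((z * z + 1) * w - (w * w + 1) * z) with ((z - w) * (z * w - 1)) by ring.
    apply Cmult_neq_0; apply Cminus_eq_contra; assumption.
  - replace (z * 2 - (z * z + 1)) with (2 * z - (z * z + 1)) by ring.
    apply Cminus_sq_neq0; assumption.
Qed.

End RootOfUnitySum.

Lemma bcoef_double_angle (M K x : R) : M <> 0 -> sin x <> 0 -> cos x <> 0 ->
  / sin (2 * x) * (((M - K + 1) * sin (K * x + x) - (M - K - 1) * sin (K * x - x)) / (M * sin x)
                   * sin (K * x))
  = (1 - cos (K * (2 * x))) / (M * (1 - cos (2 * x))) + (M - K) / M * (sin (K * (2 * x)) / sin (2 * x)).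
Proof.
  intros hM hs hc.
  replace (K * (2 * x)) with (2 * (K * x)) by ring.
  rewrite sin_plus, sin_minus, !sin_2a, !cos_2a_sin.
  field. repeat split; try assumption. intro h. apply hs. nra.
Qed.

Lemma pcoef_trig (N k : nat) : (1 <= N)%nat ->
  let M := INR N + 2 in
  let phi := 2 * PI / M in
  pcoef N k = (1 - cos (INR k * phi)) / (M * (1 - cos phi))
              + (M - INR k) / M * (sin (INR k * phi) / sin phi).
Proof.
  intros HN M phi. pose proof PI_RGT_0. apply le_INR in HN. simpl in HN.
  assert (hx : 0 < PI / M <= PI / 3).
  { unfold M; split; [apply Rdiv_lt_0_compat; lra |].
    apply Rmult_le_compat_l; [lra | apply Rinv_le_contravar; lra]. }
  replace phi with (2 * (PI / M)) by (unfold phi; field; unfold M; lra).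
  rewrite <- bcoef_double_angle.
  - unfold pcoef, bcoef. fold M.
    replace (2 * PI / M) with (2 * (PI / M)) by (unfold Rdiv; ring).
    replace ((INR k + 1) * PI / M) with (INR k * (PI / M) + PI / M) by (unfold Rdiv; ring).
    replace ((INR k - 1) * PI / M) with (INR k * (PI / M) - PI / M) by (unfold Rdiv; ring).
    replace (INR k * PI / M) with (INR k * (PI / M)) by (unfold Rdiv; ring).
    reflexivity.
  - unfold M; lra.
  - apply Rgt_not_eq, sin_gt_0; lra.
  - apply Rgt_not_eq, cos_gt_0; lra.
Qed.

Lemma acoef_cis (M x : R) (k : nat) : M <> 0 -> sin x <> 0 -> cos x <> 1 ->
  acoef (RtoC M) (cis x) k
  = RtoC ((1 - cos (INR k * x)) / (M * (1 - cos x)) + (M - INR k) / M * (sin (INR k * x) / sin x)).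
Proof.
  intros hM hs hc.
  assert (hc' : 1 - cos x <> 0) by lra.
  unfold acoef. rewrite cis_pow, cis_add_inv, cis_add_inv, cis_sub_inv, cis_sub_inv.
  rewrite RtoC_plus, !RtoC_mult, !RtoC_div, !RtoC_mult, !RtoC_minus by auto using Rmult_integral_contrapositive_currified.
  field; repeat split; try exact Ci_nz; try (apply RtoC_neq0; assumption).
  - rewrite <- RtoC_minus. apply RtoC_neq0. assumption.
  - rewrite <- RtoC_mult, <- RtoC_minus. apply RtoC_neq0. lra.
Qed.

Lemma pcoef_0 (N : nat) : pcoef N 0 = 0.
Proof. unfold pcoef. rewrite Rmult_0_l, Rdiv_0_l, sin_0. ring. Qed.

Lemma pcoef_succ (N : nat) : pcoef N (S N) = 0.
Proof.
  unfold pcoef, bcoef. rewrite S_INR.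
  replace ((INR N + 1 + 1) * PI / (INR N + 2)) with PI by (field; pose proof (pos_INR N); lra).
  rewrite sin_PI. unfold Rdiv. ring.
Qed.

Lemma sum_f_R0_drop_ends (f : nat -> R) (n : nat) : f 0%nat = 0 -> f (S (S n)) = 0 ->
  sum_f_R0 f (S (S n)) = sum_f_R0 (fun j => f (S j)) n.
Proof.
  intros h0 hn. rewrite decomp_sum by lia. simpl pred.
  rewrite h0, Rplus_0_l. cbn [sum_f_R0]. rewrite hn, Rplus_0_r. reflexivity.
Qed.

Lemma P_re_im_csum (N : nat) (t : R) : (1 <= N)%nat ->
  (P_re N t, P_im N t) = csum (fun k => RtoC (pcoef N k) * cis t ^ k)%C (S N).
Proof.
  intro HN.
  assert (hlast : S (S (N - 1)) = S N) by lia.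
  apply C_ext; rewrite ?csum_fst, ?csum_snd, <- hlast, sum_f_R0_drop_ends;
    try (rewrite ?hlast, ?pcoef_0, ?pcoef_succ; simpl; ring);
    apply sum_eq; intros j _; rewrite cis_pow; simpl; ring.
Qed.

Lemma pcoef_acoef (N k : nat) : (1 <= N)%nat ->
  RtoC (pcoef N k) = acoef (RtoC (INR N + 2)) (cis (2 * PI / (INR N + 2))) k.
Proof.
  intro HN. rewrite pcoef_trig by exact HN.
  pose proof PI_RGT_0. apply le_INR in HN as HN'. simpl in HN'.
  assert (hphi : 0 < 2 * PI / (INR N + 2) <= 2 * PI / 3).
  { split; [apply Rdiv_lt_0_compat; lra |].
    apply Rmult_le_compat_l; [lra | apply Rinv_le_contravar; lra]. }
  rewrite acoef_cis; [reflexivity | lra | apply Rgt_not_eq, sin_gt_0; lra |].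
  apply Rlt_not_eq. rewrite <- cos_0. apply cos_decreasing_1; lra.
Qed.

Lemma sqr_add_cos_sin_swap (a b x : R) :
  (a + b * cos x) ^ 2 + (b * sin x) ^ 2 = (a * cos x + b) ^ 2 + (a * sin x) ^ 2.
Proof.
  pose proof (sin2_cos2 x) as h. unfold Rsqr in h.
  replace ((a + b * cos x) ^ 2 + (b * sin x) ^ 2)
    with (a ^ 2 + 2 * a * b * cos x + b ^ 2 * (sin x * sin x + cos x * cos x)) by ring.
  replace ((a * cos x + b) ^ 2 + (a * sin x) ^ 2)
    with (a ^ 2 * (sin x * sin x + cos x * cos x) + 2 * a * b * cos x + b ^ 2) by ring.
  rewrite h. ring.
Qed.

Lemma P_re_im_closed_form (N : nat) (t : R) :
  (1 <= N)%nat -> 0 < t < PI -> t <> 2 * PI / (INR N + 2) ->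
  let M := INR N + 2 in
  let c := cos (2 * PI / M) in
  let b := 2 / M * ((1 - c) / (1 - cos t)) * (sin t / (cos t - c) ^ 2) * sin (M * t / 2) in
  (2 * (P_re N t, P_im N t))%C = (RtoC (/ (cos t - c)) + RtoC b * cis (M * t / 2))%C.
Proof.
  intros HN Ht Htphi M c b.
  pose proof PI_RGT_0. apply le_INR in HN as HM. simpl in HM.
  set (phi := 2 * PI / M) in *. change (t <> phi) in Htphi.
  assert (hphi : 0 < phi <= 2 * PI / 3).
  { split; [apply Rdiv_lt_0_compat; unfold M; lra |].
    apply Rmult_le_compat_l; [lra | apply Rinv_le_contravar; unfold M; lra]. }
  assert (hM0 : M <> 0) by (unfold M; lra).
  assert (hMS : INR (S (S N)) = M) by (rewrite !S_INR; unfold M; ring).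
  assert (h1t : 1 - cos t <> 0).
  { apply Rgt_not_eq, Rgt_minus. rewrite <- cos_0. apply cos_decreasing_1; lra. }
  assert (htc : cos t - c <> 0).
  { intro h. apply Htphi. unfold c in h. apply cos_inj; lra. }
  rewrite P_re_im_csum by exact HN.
  erewrite csum_ext; [| intro k; rewrite pcoef_acoef by exact HN; reflexivity].
  fold M phi. rewrite <- hMS.
  pose proof (csum_acoef_period (S N) (cis phi) (cis t) (cis (M * t / 2))) as E. cbv zeta in E.
  rewrite E; clear E.
  - rewrite hMS, !cis_avg, cis_sin_mul. fold c.
    unfold b. rewrite !RtoC_mult, !RtoC_div, RtoC_inv, RtoC_pow, !RtoC_minus by auto using pow_nonzero.
    field; repeat split; [rewrite <- RtoC_minus .. | ]; apply RtoC_neq0; assumption.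
  - rewrite cis_pow, hMS, <- cis_2PI. f_equal. unfold phi. field. exact hM0.
  - rewrite cis_pow, <- cis_add, hMS. f_equal. field.
  - apply cis_neq0.
  - apply cis_neq0.
  - rewrite <- cis_0. apply cis_neq; lra.
  - rewrite <- cis_add, <- cis_0. apply cis_neq; lra.
  - rewrite <- cis_0. apply cis_neq; lra.
  - rewrite <- cis_add, <- cis_0. apply cis_neq; lra.
  - apply cis_neq; lra.
Qed.

Theorem theorem2 (N : nat) (t : R) :
  (1 <= N)%nat ->
  0 < t < PI ->
  t <> 2 * PI / (INR N + 2) ->
  let M := INR N + 2 in
  let c := cos (2 * PI / M) in
  4 * P_abs2 N t =
    (cos (M * t / 2) / (cos t - c)
     + 2 / M * ((1 - c) / (1 - cos t)) * (sin t / (cos t - c) ^ 2) * sin (M * t / 2)) ^ 2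
    + (sin (M * t / 2) / (cos t - c)) ^ 2.
Proof.
  intros HN Ht Htphi M c.
  pose proof (P_re_im_closed_form N t HN Ht Htphi) as E. cbv zeta in E. fold M c in E.
  set (b := 2 / M * ((1 - c) / (1 - cos t)) * (sin t / (cos t - c) ^ 2) * sin (M * t / 2)) in *.
  assert (hre := f_equal fst E). assert (him := f_equal snd E). simpl in hre, him.
  unfold P_abs2.
  replace (4 * (P_re N t ^ 2 + P_im N t ^ 2))
    with ((2 * P_re N t) ^ 2 + (2 * P_im N t) ^ 2) by ring.
  replace (2 * P_re N t) with (/ (cos t - c) + b * cos (M * t / 2)) by lra.
  replace (2 * P_im N t) with (b * sin (M * t / 2)) by lra.
  rewrite sqr_add_cos_sin_swap. unfold Rdiv. ring.
Qed.
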